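(* Let $k$ be an integer and $d,m\geqslant1$ integers, let $U\subset\{k+d,k+2d,\dots,k+md\}$, let $q$ be a positive integer coprime to $d$, and let $a$ be a residue class modulo $q$. If $|U|\geqslant\frac m2+\frac q2$, then the number of elements of $U+U$ that are congruent to $a$ modulo $q$ is at least $\frac2q|U|-1$.
   Context: $U+U=\{u+u':u,u'\in U\}$. *)

From mathcomp Require Import all_boot all_order all_algebra.
From mathcomp Require Import finmap.
Set Implicit Arguments. Unset Strict Implicit. Unset Printing Implicit Defensive.
Import Order.TTheory GRing.Theory Num.Theory.
Local Open Scope fset_scope.

Definition sumset (U : {fset int}) : {fset int} :=
  [fset (u + v)%R | u in U, v in U].

Definition AP (k d : int) (m : nat) : {fset int} :=
  [fset (k + (i%:Z) * d)%R | i in iota 1 m].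

From mathcomp Require Import all_boot all_order all_algebra.
From mathcomp Require Import finmap zify ring lra.
Import Order.TTheory GRing.Theory Num.Theory.
Local Open Scope fset_scope.
Local Open Scope ring_scope.

(* Write n = |U|.  For a residue r modulo q let C r be
   the elements of U congruent to r and C' r those x in U with a - x
   congruent to r.  Every sum of an element of C r and an element of C' r
   lies in U + U and is congruent to a, so the target set T contains the
   sumset C r + C' r.  The proof combines three general facts:
   - (sumset inequality in an ordered ring) |A + B| >= |A| + |B| - 1 for
     nonempty finite A, B, by induction removing the maximum of A;
   - (class bound) a subset of {k + d, ..., k + m d}, q coprime to d, whose
     elements are pairwise congruent modulo q has at most ceil(m/q)
     elements, i.e. q |V| < m + q;
   - (averaging) the classes C r, resp. C' r, partition U, so some r has
     q (|C r| + |C' r|) >= 2 n.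
   As 2 n >= m + q, the class bound makes both C r and C' r nonempty, and
   the sumset inequality yields q (|T| + 1) >= 2 n, which is the claim. *)

Lemma card_fset_sep (T : choiceType) (U : {fset T}) (P : pred T) :
  #|` [fset x in U | P x]| = count P U.
Proof.
have -> : [fset x in U | P x] = [fset x in filter P U].
  by apply/fsetP => x; rewrite !inE mem_filter andbC.
by rewrite card_fseq undup_id ?size_filter // filter_uniq // fset_uniq.
Qed.

Lemma exists_ge_average {q : nat} (F : 'I_q -> nat) : (0 < q)%N ->
  exists r : 'I_q, (\sum_(i < q) F i <= q * F r)%N.
Proof.
move=> q_gt0; have [|r max_r] := bigop.eq_bigmax F; first by rewrite card_ord.
exists r; apply: (@leq_trans (\sum_(i < q) \max_j F j)).
  by apply: leq_sum => i _; apply: bigop.leq_bigmax.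
by rewrite sum_nat_const card_ord max_r.
Qed.

Section OrderedSumsets.
Context {R : realDomainType}.

Definition addfset (A B : {fset R}) : {fset R} := [fset u + v | u in A, v in B].

Lemma fset_max {A : {fset R}} : A != fset0 ->
  exists2 a, a \in A & {in A, forall y, y <= a}.
Proof.
case/fset0Pn => x0 x0A; exists (\big[Order.max/x0]_(y <- A) y).
  rewrite big_seq; elim/big_rec: _ => // y z yA zA.
  by rewrite maxEle; case: ifP.
by move=> y yA; apply: le_bigmax_seq.
Qed.

Lemma card_addfset1 (a : R) (B : {fset R}) : #|` addfset [fset a] B| = #|` B|.
Proof.
have -> : addfset [fset a] B = [fset a + v | v in B].
  apply/fsetP => x; apply/imfset2P/imfsetP => [[u] | [v vB ->]].
    by rewrite inE => /eqP -> [v vB ->]; exists v.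
  by exists a; rewrite ?inE //; exists v.
by apply/eqP/card_in_imfsetP => u v _ _; apply: addrI.
Qed.

(* Removing the maximum a of A loses at least the sum a + max B, which no
   other pair of summands reaches. *)
Lemma addfset_remove_max (A B : {fset R}) (a : R) : a \in A ->
  {in A, forall y, y <= a} -> B != fset0 ->
  (#|` addfset (A `\ a) B| < #|` addfset A B|)%N.
Proof.
move=> aA a_max /fset_max [b bB b_max].
have sub : a + b |` addfset (A `\ a) B `<=` addfset A B.
  apply/fsubsetP => x; rewrite in_fset1U => /orP [/eqP -> | ].
    exact: in_imfset2.
  case/imfset2P => u; rewrite in_fsetD1 => /andP [_ uA] [v vB ->].
  exact: in_imfset2.
have fresh : a + b \notin addfset (A `\ a) B.
  apply/imfset2P => -[u]; rewrite in_fsetD1 => /andP [ua uA] [v vB] /eqP.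
  by rewrite gt_eqF // ltr_leD ?b_max // lt_neqAle ua a_max.
by move: (fsubset_leq_card sub); rewrite cardfsU1 fresh.
Qed.

Lemma card_addfset_ge {A B : {fset R}} : A != fset0 -> B != fset0 ->
  (#|` A| + #|` B| <= (#|` addfset A B|).+1)%N.
Proof.
move=> An Bn; have [n cardA] : exists n, #|` A| = n.+1.
  by exists #|` A|.-1; rewrite prednK // cardfs_gt0.
elim: n A cardA An => [|n IH] A cardA An.
  have /cardfs1P [a A_eq] : #|` A| == 1%N by rewrite cardA.
  by rewrite A_eq cardfs1 card_addfset1.
have [a aA a_max] := fset_max An.
have cardA' : #|` A `\ a| = n.+1 by move: cardA; rewrite (cardfsD1 a) aA => -[].
have A'n : A `\ a != fset0 by rewrite -cardfs_gt0 cardA'.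
rewrite cardA -cardA' addSn ltnS; apply: leq_trans (IH _ cardA' A'n) _.
exact: addfset_remove_max.
Qed.

End OrderedSumsets.

Lemma memAP (k d : int) (m : nat) (x : int) : x \in AP k d m ->
  exists2 i : nat, (0 < i <= m)%N & x = k + i%:Z * d.
Proof.
case/imfsetP => i /=; rewrite mem_iota => /andP [i_ge1 i_lt] ->.
by exists i; rewrite // i_ge1 -ltnS -add1n.
Qed.

(* Indices in [1, m] that are pairwise congruent modulo q number at most
   ceil(m/q): they lie in distinct blocks of q consecutive integers. *)
Lemma card_congruent_indices (m q : nat) (S : {fset nat}) :
  (0 < m)%N -> (0 < q)%N -> {in S, forall i, 0 < i <= m}%N ->
  {in S &, forall i j, i = j %[mod q]} -> (q * #|` S| < m + q)%N.
Proof.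
move=> m_gt0 q_gt0 S_range S_congr; pose block i := (i.-1 %/ q)%N.
have block_inj : {in S &, injective block}.
  move=> i j iS jS same_block.
  have /andP [i_gt0 _] := S_range i iS; have /andP [j_gt0 _] := S_range j jS.
  have same_rem : (i.-1 %% q = j.-1 %% q)%N.
    by apply/eqP; rewrite -(eqn_modDr 1) !addn1 !prednK // (S_congr i j iS jS).
  rewrite -(prednK i_gt0) -(prednK j_gt0) (divn_eq i.-1 q) (divn_eq j.-1 q).
  by move: same_block; rewrite /block => ->; rewrite same_rem.
have : (#|` block @` S| <= size (iota 0 (m.-1 %/ q).+1))%N.
  apply: uniq_leq_size (fset_uniq _) _ => _ /imfsetP [i iS ->].
  have /andP [_ i_le] := S_range i iS.
  by rewrite mem_iota ltnS leq_div2r // -!subn1 leq_sub2r.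
rewrite size_iota (eqP (introT (card_in_imfsetP _ _) block_inj)).
by have := leq_divM m.-1 q; nia.
Qed.

Lemma AP_congruence (k d : int) (q i j : nat) : coprimez q d ->
  (k + i%:Z * d == k + j%:Z * d %[mod q])%Z -> i = j %[mod q].
Proof.
move=> cop; rewrite eqz_modDl eqz_mod_dvd -mulrBl Gauss_dvdzl //.
by rewrite -eqz_mod_dvd !modz_nat eqz_nat => /eqP.
Qed.

Lemma class_bound (k d : int) (m q : nat) (V : {fset int}) :
  0 < d -> (0 < m)%N -> (0 < q)%N -> coprimez q d -> V `<=` AP k d m ->
  {in V &, forall x y, (x == y %[mod q])%Z} -> (q * #|` V| < m + q)%N.
Proof.
move=> d_gt0 m_gt0 q_gt0 cop /fsubsetP V_AP V_congr.
pose index x := `|((x - k) %/ d)%Z|%N.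
have indexE (i : nat) : index (k + i%:Z * d) = i.
  by rewrite /index addrC addKr mulzK ?gt_eqF.
have index_inj : {in V &, injective index}.
  move=> x y /V_AP /memAP [i _ ->] /V_AP /memAP [j _ ->].
  by rewrite !indexE => ->.
rewrite -(eqP (introT (card_in_imfsetP _ _) index_inj)).
apply: card_congruent_indices => //.
  by move=> _ /imfsetP [x /V_AP /memAP [i i_range ->] ->]; rewrite indexE.
move=> _ _ /imfsetP [x xV ->] /imfsetP [y yV ->].
have /V_AP /memAP [i _ x_eq] := xV; have /V_AP /memAP [j _ y_eq] := yV.
by have := V_congr x y xV yV; rewrite x_eq y_eq !indexE; apply: AP_congruence.
Qed.

Section ResidueClasses.
Variables (U : {fset int}) (q : nat).

Definition resclass (f : int -> int) (r : int) : {fset int} :=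
  [fset x in U | (f x == r %[mod q])%Z].

Lemma eqz_mod_ord (r : 'I_q) (y : int) :
  (y == (r : nat)%:Z %[mod q])%Z = (r == `|(y %% q)%Z|%N :> nat).
Proof.
have q_gt0 : (0 < q)%N by apply: leq_ltn_trans (ltn_ord r).
have rem_ge0 : 0 <= (y %% q)%Z by rewrite modz_ge0 // eqz_nat -lt0n.
rewrite (modz_small (m := r%:Z)) ?ltz_nat ?ltn_ord // eq_sym.
by rewrite -{1}(gez0_abs rem_ge0) eqz_nat.
Qed.

Lemma sum_resclass (f : int -> int) : (0 < q)%N ->
  (\sum_(r < q) #|` resclass f (r : nat)%:Z|)%N = #|` U|.
Proof.
move=> q_gt0.
under eq_bigr => r _ do rewrite card_fset_sep -sum1_count big_mkcond /=.
rewrite exchange_big /= card_fset_sum1; apply: eq_bigr => y _.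
have rem_lt : (`|(f y %% q)%Z|%N < q)%N.
  by rewrite -ltz_nat gez0_abs ?modz_ge0 ?ltz_pmod ?ltz_nat // eqz_nat -lt0n.
rewrite (bigD1 (Ordinal rem_lt)) // eqz_mod_ord eqxx big1 // => r r_neq.
rewrite eqz_mod_ord; case: ifP r_neq => // /eqP rem_eq.
by rewrite -val_eqE /= rem_eq eqxx.
Qed.

Lemma resclass_bound (k d : int) (m : nat) (f : int -> int) (r : int) :
  0 < d -> (0 < m)%N -> (0 < q)%N -> coprimez q d -> U `<=` AP k d m ->
  (forall x y, (f x == f y %[mod q])%Z -> (x == y %[mod q])%Z) ->
  (q * #|` resclass f r| < m + q)%N.
Proof.
move=> d_gt0 m_gt0 q_gt0 cop U_AP f_refl; apply: class_bound cop _ _ => //.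
  by apply: fsubset_trans U_AP; apply/fsubsetP => x; rewrite inE => /andP [].
move=> x y; rewrite !inE => /andP [_ /eqP fx_r] /andP [_ /eqP fy_r].
by apply: f_refl; rewrite fx_r fy_r.
Qed.

Lemma addfset_resclass (a r : int) :
  addfset (resclass id r) (resclass (fun x => a - x) r)
    `<=` [fset x in sumset U | (x == a %[mod q])%Z].
Proof.
apply/fsubsetP => z /imfset2P [x]; rewrite !inE => /andP [xU /eqP x_r] [y].
rewrite !inE => /andP [yU /eqP ay_r] ->; rewrite in_imfset2 //=.
by rewrite -(eqz_modDr (- y)) addrK x_r ay_r.
Qed.

End ResidueClasses.

Theorem mainTheorem8 (k d : int) (m : nat) (U : {fset int}) (q : nat) (a : int) :
  0 < d -> (1 <= m)%N ->
  fsubset U (AP k d m) ->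
  (0 < q)%N -> coprimez q%:Z d ->
  (#|` U|%:R : rat) >= m%:R / 2 + q%:R / 2 ->
  (#|` [fset x in sumset U | (x == a %[mod q%:Z])%Z]%fset|%:R : rat)
    >= 2 / q%:R * #|` U|%:R - 1.
Proof.
move=> d_gt0 m_gt0 U_AP q_gt0 cop U_large.
set n := #|` U| in U_large *; set T := [fset x in sumset U | _].
have mq_le : (m + q <= 2 * n)%N by rewrite -(ler_nat rat) natrD natrM; lra.
pose C (r : 'I_q) := resclass U q id r%:Z.
pose C' (r : 'I_q) := resclass U q (fun x => a - x) r%:Z.
have [r r_avg] := exists_ge_average (fun r => (#|` C r| + #|` C' r|)%N) q_gt0.
rewrite big_split /= !sum_resclass // -/n addnn -mul2n in r_avg.
have C_small : (q * #|` C r| < m + q)%N.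
  by apply: (resclass_bound U q k d m) => // x y.
have C'_small : (q * #|` C' r| < m + q)%N.
  apply: (resclass_bound U q k d m) => // x y; rewrite !eqz_mod_dvd.
  by rewrite (_ : a - x - (a - y) = - (x - y)) ?dvdzE ?abszN //; ring.
have C_ne : C r != fset0.
  rewrite -cardfs_eq0; apply: contraTneq r_avg => ->.
  by rewrite add0n -ltnNge (leq_trans C'_small mq_le).
have C'_ne : C' r != fset0.
  rewrite -cardfs_eq0; apply: contraTneq r_avg => ->.
  by rewrite addn0 -ltnNge (leq_trans C_small mq_le).
have T_large : (2 * n <= q * (#|` T|).+1)%N.
  apply: leq_trans r_avg _; rewrite leq_mul2l; apply/orP; right.
  apply: leq_trans (card_addfset_ge C_ne C'_ne) _; rewrite ltnS.
  exact: fsubset_leq_card (addfset_resclass _ _ _ _).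
have q_pos : (0 : rat) < q%:R by rewrite ltr0n.
rewrite lerBlDr mulrAC ler_pdivrMr //.
by move: T_large; rewrite -(ler_nat rat) !natrM -addn1 natrD; nra.
Qed.
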